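(* Let $\alpha$ be a badly approximable real number, i.e. $\inf_{q\ge1} q\,\|q\alpha\|>0$. There exists a constant $C(\alpha)>0$ such that for every integer $q\ge2$, $$\sum_{x=q}^{q^3}\frac{1}{\|\alpha x\|\,x\,(\log_2 x)^2}\le C(\alpha).$$
   Context: For a real number $x$, $\|x\|$ denotes the distance from $x$ to the nearest integer; $\log_2$ denotes the logarithm in base $2$. *)

From Stdlib Require Import Reals.
Open Scope R_scope.

Definition dist_nint (x : R) : R := Rmin (frac_part x) (1 - frac_part x).

Definition log2 (x : R) : R := ln x / ln 2.

Definition badly_approximable (alpha : R) : Prop :=
  exists c : R, 0 < c /\ forall q : nat, (1 <= q)%nat -> c <= INR q * dist_nint (INR q * alpha).

From Stdlib Require Import Reals Lra Lia ZArith.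
Open Scope R_scope.

(* Let c > 0 with c <= n ||n alpha|| for all n >= 1.  The sum over [q, q^3] is
   cut into dyadic blocks [2^k, 2^(k+1)).  On such a block (N = 2^k) every value
   ||x alpha|| is at least c/(4N), and for y < x in the block
   | ||x alpha|| - ||y alpha|| | >= min(||(x-y) alpha||, ||(x+y) alpha||) >= c/(4N).
   A pigeonhole argument on the integer parts of ||x alpha|| / (c/(4N)) then
   bounds sum 1/||x alpha|| over the block by (4N/c) times a harmonic sum, i.e.
   by O(N k).  Since x (log2 x)^2 >= N k^2 on the block, the block contributes
   O(1/k) to the sum.  Finally [q, q^3] lies inside [2^K, 2^(3K+3)) with
   K = log2 q, i.e. in 2K+3 blocks of index >= K, whose total is O(1).
   The file develops: finite and interval sums; the pigeonhole estimate for
   well-spaced reals; facts on ||.||; the block estimate (Section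
   BlockEstimate); the combinatorial window lemma; and the theorem. *)

Fixpoint sumR (f : nat -> R) (n : nat) : R :=
  match n with O => 0 | S n => sumR f n + f n end.

Definition sum_range (f : nat -> R) (a b : nat) : R :=
  sumR (fun i => f (a + i)%nat) (b - a).

Lemma sumR_ext (f g : nat -> R) (n : nat) :
  (forall i, (i < n)%nat -> f i = g i) -> sumR f n = sumR g n.
Proof.
  induction n as [|n IH]; simpl; intros H; [reflexivity|].
  rewrite IH by (intros; apply H; lia). rewrite H by lia. reflexivity.
Qed.

Lemma sumR_le (f g : nat -> R) (n : nat) :
  (forall i, (i < n)%nat -> f i <= g i) -> sumR f n <= sumR g n.
Proof.
  induction n as [|n IH]; simpl; intros H; [lra|].
  assert (sumR f n <= sumR g n) by (apply IH; intros; apply H; lia).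
  assert (f n <= g n) by (apply H; lia).
  lra.
Qed.

Lemma sumR_const (a : R) (n : nat) : sumR (fun _ => a) n = INR n * a.
Proof. induction n as [|n IH]; simpl sumR; [simpl; lra|]. rewrite IH, S_INR; lra. Qed.

Lemma sumR_zero (f : nat -> R) (n : nat) :
  (forall i, (i < n)%nat -> f i = 0) -> sumR f n = 0.
Proof. intros H. rewrite (sumR_ext f (fun _ => 0)), sumR_const by exact H. lra. Qed.

Lemma sumR_nonneg (f : nat -> R) (n : nat) :
  (forall i, (i < n)%nat -> 0 <= f i) -> 0 <= sumR f n.
Proof.
  intros H. apply Rle_trans with (sumR (fun _ => 0) n).
  - rewrite sumR_const; lra.
  - now apply sumR_le.
Qed.

Lemma sumR_plus (f g : nat -> R) (n : nat) :
  sumR (fun i => f i + g i) n = sumR f n + sumR g n.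
Proof. induction n as [|n IH]; simpl; [lra|]. rewrite IH; lra. Qed.

Lemma sumR_scal (f : nat -> R) (a : R) (n : nat) :
  sumR (fun i => a * f i) n = a * sumR f n.
Proof. induction n as [|n IH]; simpl; [lra|]. rewrite IH; lra. Qed.

Lemma sumR_split (f : nat -> R) (a b : nat) :
  sumR f (a + b) = sumR f a + sumR (fun i => f (a + i)%nat) b.
Proof.
  induction b as [|b IH]; simpl.
  - rewrite Nat.add_0_r; lra.
  - rewrite Nat.add_succ_r; simpl. rewrite IH; lra.
Qed.

Lemma sumR_exchange (a : nat -> nat -> R) (n m : nat) :
  sumR (fun i => sumR (fun j => a i j) m) n = sumR (fun j => sumR (fun i => a i j) n) m.
Proof.
  induction n as [|n IH]; simpl.
  - symmetry; now apply sumR_zero.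
  - now rewrite IH, <- sumR_plus.
Qed.

Lemma sum_f_range (f : nat -> R) (a b : nat) :
  (a <= b)%nat -> sum_f a b f = sum_range f a (S b).
Proof.
  intros Hab. unfold sum_f, sum_range.
  replace (S b - a)%nat with (S (b - a)) by lia.
  generalize (b - a)%nat as n. induction n as [|n IH].
  - simpl. rewrite Nat.add_0_r. lra.
  - change (sum_f_R0 (fun x => f (x + a)%nat) n + f (S n + a)%nat
      = sumR (fun i => f (a + i)%nat) (S n) + f (a + S n)%nat).
    rewrite IH, Nat.add_comm. reflexivity.
Qed.

Lemma sum_range_chasles (f : nat -> R) (a b c : nat) :
  (a <= b <= c)%nat -> sum_range f a c = sum_range f a b + sum_range f b c.
Proof.
  intros Habc. unfold sum_range.
  replace (c - a)%nat with ((b - a) + (c - b))%nat by lia.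
  rewrite sumR_split. f_equal. apply sumR_ext. intros i _. f_equal. lia.
Qed.

Lemma sum_range_mono (f : nat -> R) (a b a' b' : nat) :
  (forall x, (a' <= x < b')%nat -> 0 <= f x) -> (a' <= a <= b)%nat -> (b <= b')%nat ->
  sum_range f a b <= sum_range f a' b'.
Proof.
  intros Hf Ha Hb.
  assert (Hnn : forall u v, (a' <= u)%nat -> (v <= b')%nat -> 0 <= sum_range f u v).
  { intros u v Hu Hv. apply sumR_nonneg. intros i Hi. apply Hf. lia. }
  rewrite (sum_range_chasles f a' a b') by lia.
  rewrite (sum_range_chasles f a b b') by lia.
  pose proof (Hnn a' a ltac:(lia) ltac:(lia)).
  pose proof (Hnn b b' ltac:(lia) ltac:(lia)).
  lra.
Qed.

Lemma sum_range_dyadic (f : nat -> R) (K T : nat) :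
  sum_range f (2 ^ K) (2 ^ (K + T)) =
  sumR (fun s => sum_range f (2 ^ (K + s)) (2 ^ (K + s + 1))) T.
Proof.
  induction T as [|T IH]; simpl sumR.
  - unfold sum_range. now rewrite Nat.add_0_r, Nat.sub_diag.
  - assert (2 ^ K <= 2 ^ (K + T))%nat by (apply Nat.pow_le_mono_r; lia).
    assert (2 ^ (K + T) <= 2 ^ (K + T + 1))%nat by (apply Nat.pow_le_mono_r; lia).
    rewrite <- IH, Nat.add_succ_r, <- (Nat.add_1_r (K + T)).
    apply sum_range_chasles. lia.
Qed.

Lemma sumR_injective_le (F : nat -> R) (g : nat -> nat) (n M : nat) :
  (forall j, 0 <= F j) -> (forall i, (i < n)%nat -> (g i <= M)%nat) ->
  (forall i i', (i < n)%nat -> (i' < n)%nat -> g i = g i' -> i = i') ->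
  sumR (fun i => F (g i)) n <= sumR F (S M).
Proof.
  intros HF Hg Hinj.
  set (hit := fun i j => if Nat.eq_dec (g i) j then F j else 0).
  assert (Hrow : forall i, (i < n)%nat -> F (g i) = sumR (hit i) (S M)).
  { intros i Hi. unfold hit. assert (Hgi := Hg i Hi).
    generalize (S M) (ltac:(lia) : (g i < S M)%nat). intros m Hm.
    induction m as [|m IH]; [lia|]. simpl.
    destruct (Nat.eq_dec (g i) m) as [E|E].
    - rewrite sumR_zero; [subst; lra|].
      intros j Hj. destruct (Nat.eq_dec (g i) j); [lia|reflexivity].
    - rewrite <- IH by lia. lra. }
  (* each column contains at most one nonzero entry, namely F j *)
  assert (Hcol : forall j m, (m <= n)%nat -> sumR (fun i => hit i j) m <= F j).
  { intros j m. induction m as [|m IH]; simpl; intros Hm; [apply HF|].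
    unfold hit at 2. destruct (Nat.eq_dec (g m) j) as [E|E].
    - rewrite sumR_zero; [lra|]. intros i Hi. unfold hit.
      destruct (Nat.eq_dec (g i) j); [|reflexivity].
      assert (i = m) by (apply Hinj; lia). lia.
    - pose proof (IH ltac:(lia)). lra. }
  rewrite (sumR_ext _ (fun i => sumR (hit i) (S M))) by exact Hrow.
  rewrite sumR_exchange. apply sumR_le. intros j _. now apply Hcol.
Qed.

(* Harmonic sum up to a power of two: 1 + 1/2 + ... + 1/2^p <= p + 1
   (the term 1/0 = 0 of Stdlib's total inverse is harmless). *)
Lemma harmonic_dyadic (p : nat) : sumR (fun j => / INR j) (S (2 ^ p)) <= INR p + 1.
Proof.
  induction p as [|p IH].
  - simpl. rewrite Rinv_0, Rinv_1. lra.
  - replace (S (2 ^ S p)) with (S (2 ^ p) + 2 ^ p)%nat by (simpl; lia).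
    rewrite sumR_split, S_INR.
    assert (HN : 0 < INR (2 ^ p)) by (apply lt_0_INR, Nat.neq_0_lt_0, Nat.pow_nonzero; lia).
    assert (sumR (fun i => / INR (S (2 ^ p) + i)) (2 ^ p) <= sumR (fun _ => / INR (2 ^ p)) (2 ^ p)).
    { apply sumR_le. intros i _. apply Rinv_le_contravar; [exact HN|]. apply le_INR; lia. }
    rewrite sumR_const, Rinv_r in H by lra. lra.
Qed.

(* Stdlib's inverse is total ([/ 0 = 0]), so it maps nonnegatives to nonnegatives. *)
Lemma Rinv_nonneg (r : R) : 0 <= r -> 0 <= / r.
Proof. intros [H|<-]; [left; now apply Rinv_0_lt_compat | rewrite Rinv_0; lra]. Qed.

Lemma pow2_INR_pos (k : nat) : 0 < INR (2 ^ k).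
Proof. apply lt_0_INR, Nat.neq_0_lt_0, Nat.pow_nonzero; lia. Qed.

Definition nat_floor (t : R) : nat := Z.to_nat (Int_part t).

Lemma nat_floor_spec (t : R) : 0 <= t -> INR (nat_floor t) <= t < INR (nat_floor t) + 1.
Proof.
  intros Ht. destruct (base_Int_part t) as [Hlo Hhi].
  assert (Hnn : (0 <= Int_part t)%Z).
  { assert (IZR (-1) < IZR (Int_part t)) by (simpl; lra). apply lt_IZR in H. lia. }
  unfold nat_floor. rewrite INR_IZR_INZ, Z2Nat.id by exact Hnn. lra.
Qed.

(* Pigeonhole estimate: n reals lying in [w, M w] and pairwise at distance >= w
   have distinct integer parts of [v / w] in [1, M], so the sum of their
   reciprocals is at most (1/w) (1 + 1/2 + ... + 1/M). *)
Lemma spaced_reciprocal_sum (v : nat -> R) (n M : nat) (w : R) :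
  0 < w ->
  (forall i, (i < n)%nat -> w <= v i <= INR M * w) ->
  (forall i i', (i < n)%nat -> (i' < n)%nat -> i <> i' -> w <= Rabs (v i - v i')) ->
  sumR (fun i => / v i) n <= / w * sumR (fun j => / INR j) (S M).
Proof.
  intros Hw Hrange Hspace.
  set (slot := fun i => nat_floor (v i / w)).
  assert (Hslot : forall i, (i < n)%nat ->
            INR (slot i) * w <= v i < (INR (slot i) + 1) * w /\ 1 <= INR (slot i)).
  { intros i Hi. destruct (Hrange i Hi) as [Hlo _].
    assert (Hq : 1 <= v i / w) by (apply Rmult_le_reg_r with w; [lra|]; field_simplify; lra).
    destruct (nat_floor_spec (v i / w) ltac:(lra)) as [A B]. fold (slot i) in A, B.
    assert (Hpos : (0 < slot i)%nat) by (apply INR_lt; simpl; lra).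
    split; [|apply (le_INR 1); lia].
    replace (v i) with (v i / w * w) by (field; lra).
    split; [apply Rmult_le_compat_r | apply Rmult_lt_compat_r]; lra. }
  assert (Hbound : forall i, (i < n)%nat -> (slot i <= M)%nat).
  { intros i Hi. apply INR_le. destruct (Hslot i Hi) as [[A _] _]. destruct (Hrange i Hi) as [_ B].
    apply Rmult_le_reg_r with w; lra. }
  assert (Hinj : forall i i', (i < n)%nat -> (i' < n)%nat -> slot i = slot i' -> i = i').
  { intros i i' Hi Hi' E. destruct (Nat.eq_dec i i') as [|Hne]; [assumption|exfalso].
    pose proof (Hspace i i' Hi Hi' Hne) as Hsp.
    destruct (Hslot i Hi) as [[A B] _]. destruct (Hslot i' Hi') as [[A' B'] _].
    rewrite E in A, B. assert (Rabs (v i - v i') < w) by (apply Rabs_def1; lra). lra. }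
  apply Rle_trans with (sumR (fun i => / w * / INR (slot i)) n).
  { apply sumR_le. intros i Hi. destruct (Hslot i Hi) as [[A _] B].
    rewrite <- Rinv_mult. apply Rinv_le_contravar; nra. }
  rewrite sumR_scal. apply Rmult_le_compat_l; [left; now apply Rinv_0_lt_compat|].
  apply (sumR_injective_le (fun j => / INR j)); auto.
  intros j. apply Rinv_nonneg, pos_INR.
Qed.

Lemma dist_nint_attained (t : R) : exists m : Z, dist_nint t = Rabs (t - IZR m).
Proof.
  unfold dist_nint, frac_part. destruct (base_Int_part t) as [H1 H2].
  unfold Rmin. destruct (Rle_dec _ _).
  - exists (Int_part t). rewrite Rabs_right; lra.
  - exists (Int_part t + 1)%Z. rewrite plus_IZR, Rabs_left; lra.
Qed.

Lemma dist_nint_le (t : R) (m : Z) : dist_nint t <= Rabs (t - IZR m).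
Proof.
  unfold dist_nint, frac_part. destruct (base_Int_part t) as [H1 H2].
  destruct (Z_le_gt_dec m (Int_part t)) as [H|H].
  - apply IZR_le in H. eapply Rle_trans; [apply Rmin_l|]. rewrite Rabs_right; lra.
  - assert (IZR (Int_part t) + 1 <= IZR m) by (rewrite <- plus_IZR; apply IZR_le; lia).
    eapply Rle_trans; [apply Rmin_r|]. rewrite Rabs_left; lra.
Qed.

Lemma dist_nint_nonneg (t : R) : 0 <= dist_nint t.
Proof. destruct (dist_nint_attained t) as [m ->]. apply Rabs_pos. Qed.

Lemma dist_nint_le_half (t : R) : dist_nint t <= 1 / 2.
Proof. unfold dist_nint, Rmin. destruct Rle_dec; lra. Qed.

Lemma dist_nint_gap (s t : R) :
  Rmin (dist_nint (s - t)) (dist_nint (s + t)) <= Rabs (dist_nint s - dist_nint t).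
Proof.
  destruct (dist_nint_attained s) as [m ->]. destruct (dist_nint_attained t) as [m' ->].
  assert (Hcase : Rabs (Rabs (s - IZR m) - Rabs (t - IZR m')) = Rabs (s - t - IZR (m - m'))
               \/ Rabs (Rabs (s - IZR m) - Rabs (t - IZR m')) = Rabs (s + t - IZR (m + m'))).
  { rewrite minus_IZR, plus_IZR. unfold Rabs; repeat destruct Rcase_abs; lra. }
  destruct Hcase as [-> | ->].
  - eapply Rle_trans; [apply Rmin_l | apply dist_nint_le].
  - eapply Rle_trans; [apply Rmin_r | apply dist_nint_le].
Qed.

Definition summand (alpha : R) (x : nat) : R :=
  / (dist_nint (alpha * INR x) * INR x * (log2 (INR x)) ^ 2).

Lemma summand_nonneg (alpha : R) (x : nat) : 0 <= summand alpha x.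
Proof.
  apply Rinv_nonneg. pose proof (dist_nint_nonneg (alpha * INR x)). pose proof (pos_INR x).
  pose proof (pow2_ge_0 (log2 (INR x))). apply Rmult_le_pos; [apply Rmult_le_pos|]; assumption.
Qed.

Lemma log2_ge (x : R) (k : nat) : INR (2 ^ k) <= x -> INR k <= log2 x.
Proof.
  intros H. unfold log2.
  assert (Hln2 : 0 < ln 2) by (rewrite <- ln_1; apply ln_increasing; lra).
  assert (E : INR (2 ^ k) = 2 ^ k) by (rewrite pow_INR; f_equal).
  assert (Hln : ln (2 ^ k) <= ln x).
  { rewrite <- E. destruct H as [H|<-]; [left; apply ln_increasing; auto|]; try lra.
    apply pow2_INR_pos. }
  rewrite ln_pow in Hln by lra.
  apply Rmult_le_reg_r with (ln 2); [exact Hln2|]. field_simplify; lra.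
Qed.

Lemma summand_le_on_block (alpha : R) (k x : nat) :
  (1 <= k)%nat -> INR (2 ^ k) <= INR x -> 0 < dist_nint (alpha * INR x) ->
  summand alpha x <= / (INR (2 ^ k) * INR k ^ 2) * / dist_nint (alpha * INR x).
Proof.
  intros Hk Hx Hd. unfold summand.
  pose proof (pow2_INR_pos k) as HN. assert (Hk1 : 1 <= INR k) by (apply (le_INR 1); lia).
  pose proof (log2_ge (INR x) k Hx) as Hl.
  assert (Hw : INR (2 ^ k) * INR k ^ 2 <= INR x * log2 (INR x) ^ 2).
  { apply Rmult_le_compat; try lra; [apply pow_le; lra | apply pow_incr; lra]. }
  rewrite <- Rinv_mult. apply Rinv_le_contravar.
  - apply Rmult_lt_0_compat; [|exact Hd]. apply Rmult_lt_0_compat; [lra | apply pow_lt; lra].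
  - replace (dist_nint (alpha * INR x) * INR x * log2 (INR x) ^ 2)
      with (INR x * log2 (INR x) ^ 2 * dist_nint (alpha * INR x)) by ring.
    apply Rmult_le_compat_r; lra.
Qed.

Section BlockEstimate.

Variables (alpha c : R).
Hypothesis Hc : 0 < c.
Hypothesis Hbad : forall q : nat, (1 <= q)%nat -> c <= INR q * dist_nint (INR q * alpha).

Lemma dist_lower (n : nat) (L : R) :
  (1 <= n)%nat -> INR n <= L -> c / L <= dist_nint (alpha * INR n).
Proof.
  intros Hn HL. pose proof (Hbad n Hn) as Hq. rewrite (Rmult_comm (INR n) alpha) in Hq.
  assert (H1 : 1 <= INR n) by (apply (le_INR 1); exact Hn).
  pose proof (dist_nint_nonneg (alpha * INR n)).
  apply Rmult_le_reg_r with L; [lra|]. replace (c / L * L) with c by (field; lra). nra.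
Qed.

Lemma dist_spacing (x y : nat) (L : R) :
  (y < x)%nat -> INR (x + y) <= L ->
  c / L <= Rabs (dist_nint (alpha * INR x) - dist_nint (alpha * INR y)).
Proof.
  intros Hxy HL. eapply Rle_trans; [|apply dist_nint_gap].
  assert (Hle : INR (x - y) <= INR (x + y)) by (apply le_INR; lia).
  apply Rmin_glb.
  - replace (alpha * INR x - alpha * INR y) with (alpha * INR (x - y))
      by (rewrite minus_INR by lia; ring).
    apply dist_lower; [lia | lra].
  - replace (alpha * INR x + alpha * INR y) with (alpha * INR (x + y))
      by (rewrite plus_INR; ring).
    apply dist_lower; [lia | lra].
Qed.

(* Core estimate: on the block [N, 2N) with N = 2^k the values ||x alpha|| lie in
   [c/(4N), 1/2] and are (c/(4N))-separated, so the pigeonhole estimate gives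
   sum 1/||x alpha|| <= (4N/c) (k + p + 1) as soon as c 2^p >= 2. *)
Lemma block_reciprocal_sum (k p : nat) :
  2 <= c * INR (2 ^ p) ->
  sumR (fun i => / dist_nint (alpha * INR (2 ^ k + i))) (2 ^ k)
  <= 4 * INR (2 ^ k) / c * (INR (k + p) + 1).
Proof.
  intros Hp. set (N := INR (2 ^ k)). pose proof (pow2_INR_pos k) as HN. fold N in HN.
  set (w := c / (4 * N)).
  assert (Hw : 0 < w) by (unfold w; apply Rdiv_lt_0_compat; lra).
  assert (Hblock : forall i, (i < 2 ^ k)%nat -> INR (2 ^ k + i + (2 ^ k + i)) <= 4 * N).
  { intros i Hi. unfold N. replace (4 * INR (2 ^ k)) with (INR (4 * 2 ^ k))
      by (rewrite mult_INR; simpl; ring). apply le_INR; lia. }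
  eapply Rle_trans.
  { apply (spaced_reciprocal_sum _ (2 ^ k) (2 ^ (k + p)) w Hw).
    - intros i Hi. split.
      + apply dist_lower; [pose proof (Nat.pow_nonzero 2 k); lia|].
        eapply Rle_trans; [|apply Hblock; exact Hi]. apply le_INR; lia.
      + eapply Rle_trans; [apply dist_nint_le_half|].
        replace (INR (2 ^ (k + p))) with (N * INR (2 ^ p))
          by (unfold N; now rewrite Nat.pow_add_r, mult_INR).
        replace (N * INR (2 ^ p) * w) with (c * INR (2 ^ p) / 4) by (unfold w; field; lra).
        lra.
    - intros i i' Hi Hi' Hne. unfold w.
      destruct (Nat.lt_total i i') as [Hlt|[Heq|Hlt]]; [| contradiction |].
      + rewrite Rabs_minus_sym. apply dist_spacing; [lia|].
        eapply Rle_trans; [|apply Hblock; exact Hi']. apply le_INR; lia.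
      + apply dist_spacing; [lia|].
        eapply Rle_trans; [|apply Hblock; exact Hi]. apply le_INR; lia. }
  replace (/ w) with (4 * N / c) by (unfold w; field; lra).
  apply Rmult_le_compat_l; [apply Rmult_le_pos; [lra | left; now apply Rinv_0_lt_compat]|].
  apply harmonic_dyadic.
Qed.

Lemma dyadic_block_bound (k p : nat) :
  (1 <= k)%nat -> 2 <= c * INR (2 ^ p) ->
  sum_range (summand alpha) (2 ^ k) (2 ^ (k + 1)) <= 4 * (INR p + 2) / c / INR k.
Proof.
  intros Hk Hp. set (N := INR (2 ^ k)). pose proof (pow2_INR_pos k) as HN. fold N in HN.
  assert (Hk1 : 1 <= INR k) by (apply (le_INR 1); exact Hk).
  unfold sum_range. replace (2 ^ (k + 1) - 2 ^ k)%nat with (2 ^ k)%nat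
    by (rewrite Nat.pow_add_r; simpl; lia).
  apply Rle_trans with
    (sumR (fun i => / (N * INR k ^ 2) * / dist_nint (alpha * INR (2 ^ k + i))) (2 ^ k)).
  { apply sumR_le. intros i Hi.
    assert (Hx : (1 <= 2 ^ k + i)%nat) by (pose proof (Nat.pow_nonzero 2 k); lia).
    apply summand_le_on_block; [exact Hk | apply le_INR; lia |].
    eapply Rlt_le_trans; [|apply (dist_lower _ (INR (2 ^ k + i)) Hx); lra].
    apply Rdiv_lt_0_compat; [exact Hc|]. apply lt_0_INR; lia. }
  rewrite sumR_scal. eapply Rle_trans.
  { apply Rmult_le_compat_l; [|apply (block_reciprocal_sum k p Hp)].
    apply Rinv_nonneg, Rmult_le_pos; [lra | apply pow_le; lra]. }
  fold N. rewrite plus_INR.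
  replace (/ (N * INR k ^ 2) * (4 * N / c * (INR k + INR p + 1)))
    with (4 * (INR k + INR p + 1) / (c * INR k ^ 2)) by (field; lra).
  replace (4 * (INR p + 2) / c / INR k)
    with (4 * (INR p + 2) * INR k / (c * INR k ^ 2)) by (field; lra).
  unfold Rdiv. apply Rmult_le_compat_r.
  - apply Rinv_nonneg, Rmult_le_pos; [lra | apply pow_le; lra].
  - pose proof (pos_INR p). nra.
Qed.

End BlockEstimate.

(* Purely combinatorial step: if a nonnegative f has dyadic blocks
   [2^k, 2^(k+1)) of mass at most B/k, then every window [q, q^3] has mass at
   most 5B, because it sits inside [2^K, 2^(3K+3)) with K = log2 q, which
   consists of 2K+3 blocks of index >= K. *)
Lemma window_from_dyadic_blocks (f : nat -> R) (B : R) :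
  (forall x, 0 <= f x) -> 0 <= B ->
  (forall k, (1 <= k)%nat -> sum_range f (2 ^ k) (2 ^ (k + 1)) <= B / INR k) ->
  forall q, (2 <= q)%nat -> sum_range f q (S (q ^ 3)) <= 5 * B.
Proof.
  intros Hf HB Hblock q Hq.
  set (K := Nat.log2 q).
  destruct (Nat.log2_spec q ltac:(lia)) as [HK1 HK2]. fold K in HK1, HK2.
  assert (HK : (1 <= K)%nat) by (destruct K; simpl in HK2; lia).
  assert (Hcube : (q ^ 3 < 2 ^ (K + (2 * K + 3)))%nat).
  { replace (K + (2 * K + 3))%nat with (S K * 3)%nat by lia. rewrite Nat.pow_mul_r.
    apply Nat.pow_lt_mono_l; lia. }
  assert (q <= q ^ 3)%nat by (simpl; nia).
  eapply Rle_trans.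
  { apply (sum_range_mono f q (S (q ^ 3)) (2 ^ K) (2 ^ (K + (2 * K + 3)))); auto; lia. }
  rewrite sum_range_dyadic.
  assert (HK1' : 1 <= INR K) by (apply (le_INR 1); exact HK).
  apply Rle_trans with (sumR (fun _ => B / INR K) (2 * K + 3)).
  { apply sumR_le. intros s _. eapply Rle_trans; [apply Hblock; lia|].
    apply Rmult_le_compat_l; [exact HB|]. apply Rinv_le_contravar; [lra|]. apply le_INR; lia. }
  rewrite sumR_const.
  replace (INR (2 * K + 3)) with (2 * INR K + 3) by (rewrite plus_INR, mult_INR; simpl; ring).
  replace ((2 * INR K + 3) * (B / INR K)) with (2 * B + 3 * B / INR K) by (field; lra).
  assert (3 * B / INR K <= 3 * B).
  { unfold Rdiv. rewrite <- (Rmult_1_r (3 * B)) at 2. apply Rmult_le_compat_l; [lra|].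
    rewrite <- Rinv_1. apply Rinv_le_contravar; lra. }
  lra.
Qed.

Theorem lemma2 (alpha : R) (Halpha : badly_approximable alpha) :
  exists C : R, 0 < C /\
    forall q : nat, (2 <= q)%nat ->
      sum_f q (q ^ 3)%nat
        (fun x : nat => / (dist_nint (alpha * INR x) * INR x * (log2 (INR x)) ^ 2))
      <= C.
Proof.
  destruct Halpha as [c [Hc Hbad]].
  (* choose p with c 2^p >= 2, which fixes the spacing scale in block_reciprocal_sum *)
  destruct (INR_archimed c 2 Hc) as [p Hp].
  assert (Hp2 : 2 <= c * INR (2 ^ p)).
  { assert (INR p <= INR (2 ^ p)) by (apply le_INR, Nat.lt_le_incl, Nat.pow_gt_lin_r; lia).
    nra. }
  set (B := 4 * (INR p + 2) / c).
  assert (HB : 0 < B) by (unfold B; pose proof (pos_INR p); apply Rdiv_lt_0_compat; lra).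
  exists (5 * B). split; [lra|].
  intros q Hq. rewrite sum_f_range by (simpl; nia).
  apply (window_from_dyadic_blocks (summand alpha)); [apply summand_nonneg | lra | | exact Hq].
  intros k Hk. now apply dyadic_block_bound.
Qed.
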